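(* Let $f : \widehat{\mathbb{Z}} \to \widehat{\mathbb{Z}}$ be congruence preserving and $s \in \widehat{\mathbb{Z}}$. Then the map $f{\Uparrow}_s : \widehat{\mathbb{Z}} \to \widehat{\mathbb{Z}}$ is profinite preperiodic. Moreover, if $f$ is tower-stable, then for every $t \in \widehat{\mathbb{Z}}$ the map $(f{\Uparrow}_s){\Uparrow}_t : \widehat{\mathbb{Z}} \to \widehat{\mathbb{Z}}$ is constant, and this constant is independent of $t$.
   Context: $\mathbb{N}=\{1,2,\dots\}$, $\widehat{\mathbb{Z}} = \varprojlim_n \mathbb{Z}/n\mathbb{Z}$; $s\equiv_n t$ means $s-t\in n\widehat{\mathbb{Z}}$; $\widehat{\cdot}:\mathbb{N}\to\widehat{\mathbb{Z}}$ is the natural embedding. A continuous $f$ is congruence preserving if $s\equiv_n t$ implies $f(s)\equiv_n f(t)$ for all $s,t$, $n$; it then induces reductions $f_n:\mathbb{Z}/n\mathbb{Z}\to\mathbb{Z}/n\mathbb{Z}$; $\lambda_f(n)$ is the period of $f_n$ (lcm of the cycle lengths of all points, the cycle length of $x$ being the least $l\ge1$ with $f_n^k(x)=f_n^{k+l}(x)$ for some $k\ge0$). $f$ is tower-stable if for every prime $p$ the largest prime-power divisor of $\lambda_f(p)$ is $< p$ (equivalently, $f_p$ is not a cyclic permutation of length $p$). A continuous map $g:\widehat{\mathbb{Z}}\to\widehat{\mathbb{Z}}$ is profinite preperiodic if for every $x\in\widehat{\mathbb{Z}}$, every $u\in\widehat{\mathbb{Z}}$ and every sequence of positive integers $n_i\to+\infty$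 in $\mathbb{R}$ with $\widehat{n_i}\to u$ in $\widehat{\mathbb{Z}}$, the limit $\lim_i g^{n_i}(x)$ exists and depends only on $u$; in that case $g{\Uparrow}_x:\widehat{\mathbb{Z}}\to\widehat{\mathbb{Z}}$ denotes the (continuous) map $u \mapsto \lim_i g^{n_i}(x)$. Congruence preserving maps are profinite preperiodic, so $f{\Uparrow}_s$ is defined. *)

From mathcomp Require Import all_boot.
From mathcomp Require Import boolp.
Set Implicit Arguments. Unset Strict Implicit. Unset Printing Implicit Defensive.

(* The profinite integers: compatible systems of residues.
   zval x n (n >= 1) is the residue of x modulo n, in [0, n);
   zval x 0 is normalized to 0. *)
Record zhat := ZHat {
  zval : nat -> nat;
  zval0 : zval 0 = 0;
  zval_lt : forall n, 0 < n -> zval n < n;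
  zval_compat : forall d n, 0 < n -> d %| n -> zval n %% d = zval d }.

Definition hat_fun (k : nat) : nat -> nat :=
  fun n => if n is 0 then 0 else k %% n.

Lemma hat_fun0 k : hat_fun k 0 = 0. Proof. by []. Qed.
Lemma hat_fun_lt k n : 0 < n -> hat_fun k n < n.
Proof. by case: n => // n _; rewrite /= ltn_mod. Qed.
Lemma hat_fun_compat k d n : 0 < n -> d %| n -> hat_fun k n %% d = hat_fun k d.
Proof.
case: n => // n _; case: d => [|d] Hd.
  by rewrite dvd0n in Hd.
by rewrite /= modn_dvdm.
Qed.

Definition hat (k : nat) : zhat :=
  ZHat (hat_fun0 k) (@hat_fun_lt k) (@hat_fun_compat k).

(* s ≡_n t, i.e. s - t ∈ n Zhat, i.e. s and t have the same residue mod n. *)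
Definition zcong (n : nat) (s t : zhat) : Prop := zval s n = zval t n.

(* Continuity for the profinite topology (basic opens: x + m Zhat). *)
Definition zcontinuous (g : zhat -> zhat) : Prop :=
  forall x n, 0 < n -> exists m, 0 < m /\
    forall y, zcong m y x -> zcong n (g y) (g x).

Definition zconv (a : nat -> zhat) (L : zhat) : Prop :=
  forall n, 0 < n -> exists N, forall i, N <= i -> zcong n (a i) L.

Definition to_infty (ni : nat -> nat) : Prop :=
  forall M, exists N, forall i, N <= i -> M <= ni i.

Definition cong_preserving (f : zhat -> zhat) : Prop :=
  zcontinuous f /\
  forall n s t, 0 < n -> zcong n s t -> zcong n (f s) (f t).

Definition pp_limit (g : zhat -> zhat) (x u L : zhat) : Prop :=
  forall ni : nat -> nat, (forall i, 0 < ni i) -> to_infty ni ->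
    zconv (fun i => hat (ni i)) u -> zconv (fun i => iter (ni i) g x) L.

Definition profinite_preperiodic (g : zhat -> zhat) : Prop :=
  zcontinuous g /\ forall x u, exists L, pp_limit g x u L.

(* g⇑_x : u |-> lim_i g^{n_i}(x)  (chosen classically; meaningful when g is
   profinite preperiodic, where the limit exists and is unique). *)
Definition up (g : zhat -> zhat) (x : zhat) : zhat -> zhat :=
  fun u => match pselect (exists L, pp_limit g x u L) with
           | left H => projT1 (cid H)
           | right _ => x
           end.

(* The reduction f_n : Z/nZ -> Z/nZ, on representatives 0 <= y < n. *)
Definition fred (f : zhat -> zhat) (n : nat) (y : nat) : nat := zval (f (hat y)) n.

(* Cycle length of y under h: least l >= 1 with h^k y = h^(k+l) y for some k.
   (Such l always exists for a self-map of a finite set; the fallback 0 is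
   never used in that case.) *)
Definition cyc_pred (h : nat -> nat) (y : nat) : pred nat :=
  fun l => (0 < l) && `[< exists k, iter k h y = iter (k + l) h y >].

Definition cycle_length (h : nat -> nat) (y : nat) : nat :=
  match pselect (exists l, cyc_pred h y l) with
  | left H => ex_minn H
  | right _ => 0
  end.

Definition period (f : zhat -> zhat) (n : nat) : nat :=
  \big[lcmn/1]_(y < n) cycle_length (fred f n) y.

(* Tower-stable: for every prime p, every prime-power divisor q^e (e >= 1)
   of lambda_f(p) is < p (i.e. the largest one is < p). *)
Definition tower_stable (f : zhat -> zhat) : Prop :=
  forall p, prime p -> forall q e, prime q -> 0 < e ->
    q ^ e %| period f p -> q ^ e < p.

From mathcomp Require Import all_boot.
From mathcomp Require Import boolp.
Set Implicit Arguments. Unset Strict Implicit. Unset Printing Implicit Defensive.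

(* Let c(n) be the cycle length of the orbit of s mod n, so 0 < c(n) <= n.
   The f-orbit of s is eventually c(n)-periodic mod n, hence F := f⇑_s satisfies
   F(u) = f^k(s) mod n for every large k = u mod c(n): F(u) mod n depends only
   on u mod c(n).  Any map with such a modulus c(n) <= n has, by strong induction
   on n, orbits that are eventually periodic mod n, so it is profinite
   preperiodic.  If f is tower-stable then c(n) < n for n > 1: a cycle of
   length m mod m reduces to a cycle of length p mod the least prime p | m,
   forcing p | lambda_f(p).  With c(n) < n the same induction makes every
   F-orbit eventually constant mod n, uniformly in its starting point, so
   F⇑_t(u) depends neither on t nor on u. *)

Lemma zhat_ext (x y : zhat) : (forall n, 0 < n -> zval x n = zval y n) -> x = y.
Proof.
case: x y => zx x0 xl xc [zy y0 yl yc] /= E.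
have {}E : zx = zy.
  by apply: funext => -[|n]; [rewrite x0 y0 | apply: E].
by subst zy; congr ZHat; apply: Prop_irrelevance.
Qed.

Lemma zval_hat k n : 0 < n -> zval (hat k) n = k %% n.
Proof. by case: n. Qed.

Lemma zval_hat_zval x n : 0 < n -> zval (hat (zval x n)) n = zval x n.
Proof. by move=> n0; rewrite zval_hat // modn_small // zval_lt. Qed.

Lemma pigeonhole (a : nat -> nat) n : (forall k, a k < n) ->
  exists i j, i < j <= n /\ a i = a j.
Proof.
move=> a_lt; have : ~~ uniq (mkseq a n.+1).
  apply/negP => /(@uniq_leq_size _ _ (iota 0 n)).
  rewrite size_mkseq size_iota ltnn => le_sz; suff : false by [].
  by apply: le_sz => _ /mapP[k _ ->]; rewrite mem_iota a_lt.
case/(uniqPn 0) => i [j []]; rewrite size_mkseq => ij jn.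
by rewrite !nth_mkseq ?(ltn_trans ij) // => E; exists i, j; rewrite ij -ltnS jn.
Qed.

Lemma leq_of_onto (a : nat -> nat) n m :
  (forall z, z < m -> exists2 i, i < n & a i = z) -> m <= n.
Proof.
move=> onto; rewrite -(size_iota 0 m) -(size_mkseq a n).
apply: uniq_leq_size (iota_uniq 0 m) _ => z; rewrite mem_iota => /onto[i i_lt <-].
by apply: map_f; rewrite mem_iota.
Qed.

Lemma onto_of_inj (a : nat -> nat) n : (forall i, i < n -> a i < n) ->
    (forall i j, i < n -> j < n -> a i = a j -> i = j) ->
  forall z, z < n -> exists2 i, i < n & a i = z.
Proof.
move=> a_lt a_inj z zn.
have a_uniq : uniq (mkseq a n).
  rewrite map_inj_in_uniq ?iota_uniq // => i j.
  by rewrite !mem_iota !add0n; apply: a_inj.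
have a_sub : {subset mkseq a n <= iota 0 n}.
  by move=> x /mapP[i]; rewrite !mem_iota /= !add0n => /a_lt ? ->.
have := uniq_min_size a_uniq a_sub.
rewrite size_iota size_mkseq leqnn => /(_ isT)[_ /(_ z)].
by rewrite mem_iota zn => /mapP[i]; rewrite mem_iota /= add0n => ? ->; exists i.
Qed.

Definition eventually_periodic T (a : nat -> T) : Prop :=
  exists k0 P, 0 < P /\ forall k, k0 <= k -> a (k + P) = a k.

Section EventuallyPeriodic.
Variables (T : Type) (a : nat -> T) (k0 P : nat).
Hypothesis aP : forall k, k0 <= k -> a (k + P) = a k.

Lemma periodic_addM q k : k0 <= k -> a (k + q * P) = a k.
Proof.
move=> k0k; elim: q => [|q IHq]; first by rewrite addn0.
by rewrite mulSn addnCA addnC aP ?IHq // (leq_trans k0k) ?leq_addr.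
Qed.

Lemma periodic_mod j k : k0 <= j -> k0 <= k -> j = k %[mod P] -> a j = a k.
Proof.
wlog jk : j k / j <= k => [W|] k0j k0k jk_mod.
  by case: (leqP j k) => [|/ltnW] jk; [|symmetry]; apply: W.
have /dvdnP[q kj] : P %| k - j by rewrite -eqn_mod_dvd // jk_mod.
by rewrite -(subnKC jk) kj periodic_addM.
Qed.

End EventuallyPeriodic.

Lemma iter_periodic_from T (h : T -> T) y k l :
  iter k h y = iter (k + l) h y -> forall j, k <= j -> iter (j + l) h y = iter j h y.
Proof. by move=> E j kj; rewrite -(subnK kj) -addnA iterD -E -iterD. Qed.

Lemma bounded_iter_periodic (h : nat -> nat) y n : (forall k, iter k h y < n) ->
  eventually_periodic (fun k => iter k h y).
Proof.
move=> h_lt; have [i [j [/andP[ij _] E]]] := pigeonhole h_lt.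
exists i, (j - i); rewrite subn_gt0 ij; split=> //.
by apply: iter_periodic_from; rewrite subnKC // ltnW.
Qed.

Lemma cyc_predP (h : nat -> nat) y l :
  cyc_pred h y l <-> 0 < l /\ exists k, iter k h y = iter (k + l) h y.
Proof.
by split=> [/andP[l0 /asboolP]|[l0 E]] //; apply/andP; split=> //; apply/asboolP.
Qed.

Section CycleLength.
Variables (h : nat -> nat) (y n : nat).
Hypothesis orbit_lt : forall k, iter k h y < n.

Lemma cycle_length_spec :
  [/\ cyc_pred h y (cycle_length h y), cycle_length h y <= n &
      forall l, cyc_pred h y l -> cycle_length h y <= l].
Proof.
have [i [j [/andP[ij jn] E]]] := pigeonhole orbit_lt.
have Pji : cyc_pred h y (j - i).
  by apply/cyc_predP; rewrite subn_gt0 ij; split=> //; exists i; rewrite subnKC // ltnW.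
rewrite /cycle_length; case: pselect => [ex|[]]; last by exists (j - i).
case: ex_minnP => m Pm m_min; split=> //.
by rewrite (leq_trans (m_min _ Pji)) // (leq_trans (leq_subr _ _)).
Qed.

Lemma cycle_length_gt0 : 0 < cycle_length h y.
Proof. by have [/cyc_predP[] ] := cycle_length_spec. Qed.

Definition recurrent z := forall k0, exists2 k, k0 <= k & iter k h y = z.

Lemma cycle_length_full :
  cycle_length h y = n <-> forall z, z < n -> recurrent z.
Proof.
have [/cyc_predP[C0 [k Ek]] Cn C_min] := cycle_length_spec.
set C := cycle_length h y in C0 Ek Cn C_min *.
have per := periodic_mod (iter_periodic_from Ek).
split=> [Cn_eq z zn k0 | rec].
  have cyc_inj i j : i < C -> j < C -> iter (k + i) h y = iter (k + j) h y -> i = j.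
    wlog ij : i j / i <= j => [W iC jC E|iC jC E].
      by case: (leqP i j) => [|/ltnW] ij; [|symmetry]; apply: W.
    apply/eqP; rewrite eqn_leq ij /=; apply: contraT; rewrite -ltnNge => {}ij.
    have : C <= j - i.
      apply/C_min/cyc_predP; rewrite subn_gt0 ij; split=> //.
      by exists (k + i); rewrite E -addnA subnKC // ltnW.
    by rewrite leqNgt (leq_ltn_trans (leq_subr _ _)).
  rewrite Cn_eq in cyc_inj.
  have [i iC <-] := onto_of_inj (fun i _ => orbit_lt (k + i)) cyc_inj zn.
  exists (k + i + k0 * C); last by rewrite (periodic_addM (iter_periodic_from Ek)) ?leq_addr.
  by rewrite (leq_trans (leq_pmulr _ C0)) ?leq_addl.
apply/eqP; rewrite eqn_leq Cn; apply: (@leq_of_onto (fun i => iter (k + i) h y)) => z /rec.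
case/(_ k) => j kj <-; exists ((j - k) %% C); first by rewrite ltn_pmod.
apply: per; rewrite ?leq_addr //.
by rewrite modnDmr -{2}(subnKC kj).
Qed.

End CycleLength.

(* An admissible sequence for u: since n | i`! for n <= i, its residue mod n
   is eventually u mod n. *)
Definition fact_approx (u : zhat) (i : nat) : nat := zval u i`! + i`!.

Lemma fact_approx_gt0 u i : 0 < fact_approx u i.
Proof. by rewrite addn_gt0 fact_gt0 orbT. Qed.

Lemma fact_approx_to_infty u : to_infty (fact_approx u).
Proof.
move=> M; exists M => i Mi; apply: leq_trans Mi (leq_trans _ (leq_addl _ _)).
by case: i => // i; rewrite dvdn_leq ?fact_gt0 ?dvdn_fact ?leqnn.
Qed.

Lemma fact_approx_conv u : zconv (fun i => hat (fact_approx u i)) u.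
Proof.
move=> n n0; exists n => i ni; have n_dvd : n %| i`! by rewrite dvdn_fact ?n0.
by rewrite /zcong zval_hat // -modnDmr (eqP n_dvd) addn0 zval_compat ?fact_gt0.
Qed.

Lemma admissible_periodic T (a : nat -> T) k0 P u ni : 0 < P ->
    (forall k, k0 <= k -> a (k + P) = a k) ->
    to_infty ni -> zconv (fun i => hat (ni i)) u ->
  exists N, forall i k, N <= i -> k0 <= k -> k = zval u P %[mod P] -> a (ni i) = a k.
Proof.
move=> P0 aP ni_infty ni_u; have [N1 N1_ge] := ni_infty k0; have [N2 N2_u] := ni_u P P0.
exists (maxn N1 N2) => i k; rewrite geq_max => /andP[/N1_ge k0ni /N2_u ni_mod] k0k k_mod.
apply: periodic_mod aP _ _ k0ni k0k _.
by rewrite k_mod -ni_mod zval_hat // modn_mod.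
Qed.

Lemma ex_zconv_stationary (a : nat -> zhat) :
    (forall n, 0 < n -> exists N, forall i, N <= i -> zcong n (a i) (a N)) ->
  exists L, zconv a L.
Proof.
move=> a_stat.
have [Nf Nf_stat] : {Nf : nat -> nat & forall n, 0 < n ->
    forall i, Nf n <= i -> zval (a i) n = zval (a (Nf n)) n}.
  apply: (choice (P := fun n N => 0 < n ->
    forall i, N <= i -> zval (a i) n = zval (a N) n)) => n.
  by case: (posnP n) => [-> | /a_stat[N]]; [exists 0 | exists N].
pose v n := zval (a (Nf n)) n.
have v0 : v 0 = 0 by rewrite /v zval0.
have v_lt n : 0 < n -> v n < n by apply: zval_lt.
have v_compat d n : 0 < n -> d %| n -> v n %% d = v d.
  move=> n0 dn; have d0 := dvdn_gt0 n0 dn.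
  rewrite /v -(Nf_stat n n0 (maxn (Nf n) (Nf d))) ?leq_maxl //.
  by rewrite zval_compat // Nf_stat ?leq_maxr.
by exists (ZHat v0 v_lt v_compat) => n n0; exists (Nf n) => i /(Nf_stat n n0).
Qed.

Lemma ex_index_mod k0 P r : 0 < P -> exists2 k, k0 <= k & k = r %[mod P].
Proof.
move=> P0; exists (k0 * P + r); last exact: modnMDl.
by rewrite (leq_trans (leq_pmulr _ P0)) ?leq_addr.
Qed.

Section PreperiodicLimit.
Variables (g : zhat -> zhat) (x : zhat).

Lemma pp_limit_of_periodic :
    (forall n, 0 < n -> eventually_periodic (fun k => zval (iter k g x) n)) ->
  forall u, exists L, pp_limit g x u L.
Proof.
move=> per u.
have [L L_lim] : exists L, zconv (fun i => iter (fact_approx u i) g x) L.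
  apply: ex_zconv_stationary => n n0.
  have [k0 [P [P0 aP]]] := per n n0; have [k k0k k_mod] := ex_index_mod k0 (zval u P) P0.
  have [N N_eq] := admissible_periodic P0 aP (fact_approx_to_infty u) (fact_approx_conv u).
  exists N => i Ni.
  exact: etrans (N_eq i k Ni k0k k_mod) (esym (N_eq N k (leqnn N) k0k k_mod)).
exists L => ni _ ni_infty ni_u n n0.
have [k0 [P [P0 aP]]] := per n n0; have [k k0k k_mod] := ex_index_mod k0 (zval u P) P0.
have [N1 N1_eq] := admissible_periodic P0 aP ni_infty ni_u.
have [N2 N2_eq] := admissible_periodic P0 aP (fact_approx_to_infty u) (fact_approx_conv u).
have [N3 N3_L] := L_lim n n0.
exists N1 => i N1i; rewrite /zcong -(N3_L (maxn N2 N3)) ?leq_maxr //.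
exact: etrans (N1_eq i k N1i k0k k_mod) (esym (N2_eq _ k (leq_maxl _ _) k0k k_mod)).
Qed.

Lemma pp_limit_zval u L n k0 P k : pp_limit g x u L -> 0 < n -> 0 < P ->
    (forall j, k0 <= j -> zval (iter (j + P) g x) n = zval (iter j g x) n) ->
  k0 <= k -> k = zval u P %[mod P] -> zval L n = zval (iter k g x) n.
Proof.
move=> L_lim n0 P0 aP k0k k_mod.
have [N1 N1_L] := L_lim _ (fact_approx_gt0 u) (fact_approx_to_infty u) (fact_approx_conv u) n n0.
have [N2 N2_eq] := admissible_periodic (a := fun j => zval (iter j g x) n) P0 aP
  (fact_approx_to_infty u) (fact_approx_conv u).
rewrite -(N1_L (maxn N1 N2)) ?leq_maxl //.
exact: N2_eq (leq_maxr _ _) k0k k_mod.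
Qed.

Lemma up_pp_limit u : (exists L, pp_limit g x u L) -> pp_limit g x u (up g x u).
Proof. by move=> ex; rewrite /up; case: pselect => // ex'; case: cid. Qed.

End PreperiodicLimit.

Section Modulus.
Variables (G : zhat -> zhat) (M : nat -> nat).
Hypothesis M_bounds : forall n, 0 < n -> 0 < M n <= n.
Hypothesis G_mod : forall n u v, 0 < n -> zcong (M n) u v -> zcong n (G u) (G v).

Lemma modulus_continuous : zcontinuous G.
Proof.
move=> x n n0; exists (M n); split; last by move=> y; apply: G_mod.
by case/andP: (M_bounds n0).
Qed.

Lemma modulus_orbit_periodic t n :
  0 < n -> eventually_periodic (fun k => zval (iter k G t) n).
Proof.
elim/ltn_ind: n => n IH n0; have /andP[Mn0 Mn] := M_bounds n0.
case: (ltnP (M n) n) => [Mlt | Mge].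
  have [k0 [P [P0 aP]]] := IH _ Mlt Mn0.
  exists k0.+1, P; split=> // -[|k] //=; rewrite ltnS => k0k.
  by apply: G_mod => //; apply: aP.
pose phi y := zval (G (hat y)) n.
have orbit_phi k : zval (iter k G t) n = iter k phi (zval t n).
  elim: k => [|k IHk] //; rewrite !iterS -IHk; apply: G_mod => //.
  by rewrite (@anti_leq (M n) n) ?Mn // /zcong zval_hat_zval.
have [|k0 [P [P0 aP]]] := @bounded_iter_periodic phi (zval t n) n.
  by move=> k; rewrite -orbit_phi zval_lt.
by exists k0, P; split=> // k /aP; rewrite /= !orbit_phi.
Qed.

Lemma modulus_pp_limit x u : exists L, pp_limit G x u L.
Proof. exact: pp_limit_of_periodic (fun n => @modulus_orbit_periodic x n) u. Qed.

Lemma modulus_preperiodic : profinite_preperiodic G.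
Proof. by split; [exact: modulus_continuous | exact: modulus_pp_limit]. Qed.

Hypothesis M_lt : forall n, 1 < n -> M n < n.

Lemma modulus_orbit_constant n :
  0 < n -> exists k0 v, forall t k, k0 <= k -> zval (iter k G t) n = v.
Proof.
elim/ltn_ind: n => n IH n0; case: (ltnP 1 n) => [n1 | n_le1]; last first.
  exists 0, 0 => t k _; apply/eqP; rewrite -leqn0 -ltnS.
  by rewrite (leq_trans (zval_lt _ n0)).
have /andP[Mn0 _] := M_bounds n0.
have [k0 [v orbit_v]] := IH _ (M_lt n1) Mn0.
have v_lt : v < M n by rewrite -(orbit_v (hat 0) k0) ?zval_lt.
exists k0.+1, (zval (G (hat v)) n) => t [|k] //; rewrite ltnS => k0k.
by rewrite iterS; apply: G_mod; rewrite // /zcong orbit_v // zval_hat // modn_small.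
Qed.

Lemma modulus_up_const t u t' u' : up G t u = up G t' u'.
Proof.
suff up_mod n : 0 < n -> exists v, forall t u, zval (up G t u) n = v.
  by apply: zhat_ext => n /up_mod[v up_v]; rewrite !up_v.
move=> n0; have [k0 [v orbit_v]] := modulus_orbit_constant n0.
exists v => {}t {}u; rewrite -(orbit_v t k0) //.
apply: (pp_limit_zval (k0 := k0) (P := 1) (up_pp_limit (modulus_pp_limit t u))) => //.
- by move=> j k0j; rewrite !orbit_v // addn1 leqW.
- by rewrite !modn1.
Qed.

End Modulus.

Section CongruencePreserving.
Variables (f : zhat -> zhat) (s : zhat).
Hypothesis f_cp : cong_preserving f.

Lemma zval_f x n : 0 < n -> zval (f x) n = fred f n (zval x n).
Proof. by move=> n0; case: f_cp => _ cp; apply: cp; rewrite // /zcong zval_hat_zval. Qed.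

Lemma zval_iter_f k x n : 0 < n -> zval (iter k f x) n = iter k (fred f n) (zval x n).
Proof. by move=> n0; elim: k => [|k IHk] //; rewrite !iterS zval_f // IHk. Qed.

Lemma fred_orbit_lt n : 0 < n -> forall k, iter k (fred f n) (zval s n) < n.
Proof. by move=> n0 k; rewrite -zval_iter_f ?zval_lt. Qed.

Definition orbit_cycle_length n := cycle_length (fred f n) (zval s n).

Lemma orbit_cycle_length_bounds n : 0 < n -> 0 < orbit_cycle_length n <= n.
Proof.
move=> n0; have [_ le_n _] := cycle_length_spec (fred_orbit_lt n0).
by rewrite le_n andbT (cycle_length_gt0 (fred_orbit_lt n0)).
Qed.

Lemma orbit_cycle_length_periodic n : 0 < n -> exists k0, forall k, k0 <= k ->
  zval (iter (k + orbit_cycle_length n) f s) n = zval (iter k f s) n.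
Proof.
move=> n0; have [/cyc_predP[_ [k0 Ek0]] _ _] := cycle_length_spec (fred_orbit_lt n0).
by exists k0 => k k0k; rewrite !zval_iter_f // (iter_periodic_from Ek0).
Qed.

Lemma cp_up_pp_limit u : pp_limit f s u (up f s u).
Proof.
apply/up_pp_limit/pp_limit_of_periodic => n n0.
have /andP[C0 _] := orbit_cycle_length_bounds n0.
by have [k0 per] := orbit_cycle_length_periodic n0; exists k0, (orbit_cycle_length n).
Qed.

Lemma up_zcong n u v : 0 < n ->
  zcong (orbit_cycle_length n) u v -> zcong n (up f s u) (up f s v).
Proof.
move=> n0 uv; have /andP[C0 _] := orbit_cycle_length_bounds n0.
have [k0 per] := orbit_cycle_length_periodic n0.
have [k k0k k_mod] := ex_index_mod k0 (zval u (orbit_cycle_length n)) C0.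
have up_zval w : k = zval w (orbit_cycle_length n) %[mod orbit_cycle_length n] ->
    zval (up f s w) n = zval (iter k f s) n.
  exact: pp_limit_zval (cp_up_pp_limit (u := w)) n0 C0 per k0k.
by rewrite /zcong !up_zval // -uv.
Qed.

Lemma recurrent_dvd m p z : 0 < p -> 0 < m -> p %| m ->
    recurrent (fred f m) (zval s m) z -> recurrent (fred f p) (zval s p) (z %% p).
Proof.
move=> p0 m0 pm rec k0; have [k k0k <-] := rec k0; exists k => //.
by rewrite -!zval_iter_f // zval_compat.
Qed.

Lemma full_cycle_dvd m p : 0 < p -> 0 < m -> p %| m ->
  orbit_cycle_length m = m -> orbit_cycle_length p = p.
Proof.
move=> p0 m0 pm /(cycle_length_full (fred_orbit_lt m0)) rec_m.
apply/(cycle_length_full (fred_orbit_lt p0)) => z zp.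
rewrite -(modn_small zp); apply: (recurrent_dvd (m := m)) => //; apply: rec_m.
exact: leq_trans zp (dvdn_leq m0 pm).
Qed.

Lemma full_cycle_dvd_period p : 0 < p -> orbit_cycle_length p = p -> p %| period f p.
Proof.
move=> p0 full; rewrite /period -{1}full.
exact: (biglcmn_sup (Ordinal (zval_lt s p0))).
Qed.

Lemma tower_stable_cycle_lt : tower_stable f -> forall m, 1 < m -> orbit_cycle_length m < m.
Proof.
move=> ts m m1; have m0 : 0 < m := ltnW m1.
have /andP[_ le_m] := orbit_cycle_length_bounds m0.
rewrite ltn_neqAle le_m andbT; apply/eqP => full.
have p_pr := pdiv_prime m1; have p0 := prime_gt0 p_pr.
suff : pdiv m ^ 1 < pdiv m by rewrite expn1 ltnn.
apply: ts => //; rewrite expn1.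
exact/full_cycle_dvd_period/(full_cycle_dvd p0 m0 (pdiv_dvd m)).
Qed.

End CongruencePreserving.

Theorem theorem3p13 (f : zhat -> zhat) (s : zhat) :
  cong_preserving f ->
  profinite_preperiodic (up f s) /\
  (tower_stable f -> exists c : zhat, forall t u, up (up f s) t u = c).
Proof.
move=> f_cp; have M_bounds := orbit_cycle_length_bounds s f_cp.
have G_mod := up_zcong (s := s) f_cp.
split; first exact: modulus_preperiodic M_bounds G_mod.
move=> ts; exists (up (up f s) (hat 0) (hat 0)) => t u.
exact: modulus_up_const M_bounds G_mod (tower_stable_cycle_lt s f_cp ts) _ _ _ _.
Qed.
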